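(* Let $N\ge1$, let $X_1,\dots,X_N$ be the roots of the $N$-th Legendre polynomial transformed to $[0,1]$, and let $h_1,\dots,h_N$ be the associated Lagrange basis polynomials (a basis of $\mathsf{P}_{N-1}$, the real polynomials of degree at most $N-1$). Consider a closed sliding interface consisting of finitely many non-overlapping mortars $\Xi$, which together cover the interface, and finitely many cell faces on each of its two sides (left and right); each mortar is contained in exactly one left cell face and exactly one right cell face, and each cell face $\Omega$ is the union of the $m_\Omega\ge1$ mortars $\Xi_1,\dots,\Xi_{m_\Omega}$ contained in it. For each such face $\Omega$ and each of its mortars $\Xi_k$, let $s_k>0$ (with $\sum_k s_k=1$) be the ratio of the length of $\Xi_k$ to the length of $\Omega$ and $o_k=\sum_{\alpha<k}s_\alpha$, so that the face parameter $\xi\in[0,1]$ and the mortar parameter $z\in[0,1]$ are related by $\xi=o_k+s_kz$. Suppose each mortar $\Xi$ carries a single polynomial $\breve F^{\Xi}\in\mathsf{P}_{N-1}$ in $z$ (its common normal flux in mortar-space scaling), and for each cell face $\Omega$ (on either side) define $\widetilde F^{\Omega}\in\mathsf{P}_{N-1}$ in $\xi$ by $$\sum_{k=1}^{m_\Omega}\int_{o_k}^{o_k+s_k}\Big(\widetilde F^{\Omega}(\xi)-\tfrac{1}{s_k}\breve F^{\Xi_k}\big(\tfrac{\xi-o_k}{s_k}\big)\Big)h_j(\xi)\,d\xi=0\quad\text{for all }j=1,\dots,N.$$ Then for every cell face $\Omega$, $\int_0^1\widetilde F^{\Omega}(\xi)\,d\xi=\sum_{k=1}^{m_\Omega}\int_0^1\breve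 F^{\Xi_k}(z)\,dz$, and consequently $$\sum_{\Omega\ \text{left}}\int_0^1\widetilde F^{\Omega}(\xi)\,d\xi=\sum_{\Xi}\int_0^1\breve F^{\Xi}(z)\,dz=\sum_{\Omega\ \text{right}}\int_0^1\widetilde F^{\Omega}(\xi)\,d\xi,$$ i.e. the total flux on the left side of the sliding interface equals the total flux on the right side (global conservation across the interface).
   Context: This describes the back-projection of common fluxes from mortar elements to cell faces on a nonconforming sliding interface between two mesh subdomains in a high-order (flux reconstruction) discretization. The mortar-space flux $\breve F^{\Xi_k}$ is related to the computational-space flux on the mortar by $\widetilde F^{\Xi_k}=\breve F^{\Xi_k}/s_k$, which is the factor appearing in the defining relation; the same projection is used for both inviscid and viscous fluxes. *)

From HB Require Import structures.
From mathcomp Require Import all_boot all_order all_algebra.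
From mathcomp Require Import all_classical all_reals all_analysis.
Unset Printing Implicit Defensive.
Import Order.TTheory GRing.Theory Num.Theory.
Import numFieldNormedType.Exports.
Local Open Scope classical_set_scope.
Local Open Scope ring_scope.

Section Defs.
Variable R : realType.

Definition pint (p : {poly R}) (a b : R) : R :=
  \int[@lebesgue_measure R]_(x in `[a, b]) p.[x].

(* Legendre polynomials on [-1,1] via Bonnet's recurrence:
   P_0 = 1, P_1 = X, (n+2) P_{n+2} = (2n+3) X P_{n+1} - (n+1) P_n. *)
Fixpoint legendre_aux (n : nat) : {poly R} * {poly R} :=
  match n with
  | 0 => (1, 'X)
  | n'.+1 => let: (p, q) := legendre_aux n' in
             (q, (n'.+2)%:R^-1 *: ((2 * n' + 3)%:R *: ('X * q) - (n'.+1)%:R *: p))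
  end.
Definition legendre (n : nat) : {poly R} := (legendre_aux n).1.

Definition shifted_legendre (n : nat) : {poly R} :=
  legendre n \Po (2%:R *: 'X - 1).

Definition lagrange_basis (N : nat) (X : 'I_N -> R) (j : 'I_N) : {poly R} :=
  \prod_(i < N | i != j) ((X j - X i)^-1 *: ('X - (X i)%:P)).

(* A cell face is described by the ordered list ms of the mortars it contains
   (Xi_1, ..., Xi_m); len gives the mortar lengths. *)
Section Face.
Variable M : finType.
Variables (len : M -> R) (ms : seq M).

Definition face_len : R := \sum_(x <- ms) len x.
Definition face_mortar (k : 'I_(size ms)) : M := tnth (in_tuple ms) k.
Definition face_s (k : 'I_(size ms)) : R := len (face_mortar k) / face_len.
Definition face_o (k : 'I_(size ms)) : R :=
  \sum_(a < size ms | (a < k)%N) face_s a.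
End Face.

Definition is_face_projection (M : finType) (N : nat) (X : 'I_N -> R)
  (len : M -> R) (Fb : M -> {poly R}) (ms : seq M) (Ft : {poly R}) : Prop :=
  forall j : 'I_N,
    \sum_(k < size ms)
      pint ((Ft - (face_s M len ms k)^-1 *:
               (Fb (face_mortar M ms k) \Po
                  ((face_s M len ms k)^-1 *: ('X - (face_o M len ms k)%:P))))
            * lagrange_basis N X j)
           (face_o M len ms k) (face_o M len ms k + face_s M len ms k) = 0.

End Defs.
Arguments face_len {R M} len ms.
Arguments face_mortar {M} ms k.
Arguments face_s {R M} len ms k.
Arguments face_o {R M} len ms k.
Arguments lagrange_basis {R N} X j.
Arguments is_face_projection {R M N} X len Fb ms Ft.
Arguments pint {R} p a b.

(* Since the Lagrange basis is a partition of unity, summing the N defining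
   equations of the face flux over j tests them against the constant 1: as the
   subintervals [o_k, o_k + s_k] tile [0, 1], the integral of the face flux over
   [0, 1] equals the sum over k of the integrals of the rescaled mortar fluxes
   over [o_k, o_k + s_k], and the substitution xi = o_k + s_k z turns each of
   these into the integral of the mortar flux over [0, 1].  As every mortar lies
   in exactly one face on each side, summing over the faces of either side gives
   the total mortar flux. *)

From HB Require Import structures.
From mathcomp Require Import all_boot all_order all_algebra.
From mathcomp Require Import all_classical all_reals all_analysis.
From mathcomp Require Import zify.
Import Order.TTheory GRing.Theory Num.Theory.
Import numFieldNormedType.Exports.
Local Open Scope ring_scope.

Section PolyIntegral.
Variable R : realType.
Implicit Types (p q Q : {poly R}) (a b : R).

Lemma pint_ftc p Q a b : a < b -> Q^`() = p -> pint p a b = Q.[b] - Q.[a].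
Proof.
move=> ab dQ.
rewrite /pint /Rintegral (@continuous_FTC2 R (horner p) (horner Q)) //.
- exact/continuous_subspaceT/continuous_horner.
- split=> [x _||]; first exact: derivable_horner.
  + exact/cvg_at_right_filter/continuous_horner.
  + exact/cvg_at_left_filter/continuous_horner.
- by move=> x _; rewrite -derivE dQ.
Qed.

Definition poly_prim p : {poly R} :=
  \poly_(i < (size p).+1) (if i is k.+1 then p`_k / k.+1%:R else 0).

Lemma deriv_poly_prim p : (poly_prim p)^`() = p.
Proof.
apply/polyP => i; rewrite coef_deriv coef_poly.
case: ltnP => [_|le_p_i]; last by rewrite mul0rn nth_default.
by rewrite -[LHS]mulr_natr -mulrA mulVf ?mulr1 ?pnatr_eq0.
Qed.

Lemma pint_prim p a b : a < b ->
  pint p a b = (poly_prim p).[b] - (poly_prim p).[a].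
Proof. by move=> ab; apply: pint_ftc; rewrite ?deriv_poly_prim. Qed.

Lemma pint0 a b : a < b -> pint 0 a b = 0.
Proof. by move=> ab; rewrite (@pint_ftc _ 0) ?deriv0 ?horner0 ?subr0. Qed.

Lemma pintD p q a b : a < b -> pint (p + q) a b = pint p a b + pint q a b.
Proof.
move=> ab.
rewrite (@pint_ftc _ (poly_prim p + poly_prim q)) ?derivD ?deriv_poly_prim //.
by rewrite !pint_prim // !hornerD addrACA opprD.
Qed.

Lemma pintN p a b : a < b -> pint (- p) a b = - pint p a b.
Proof.
move=> ab; rewrite (@pint_ftc _ (- poly_prim p)) ?derivN ?deriv_poly_prim //.
by rewrite pint_prim // !hornerN opprD.
Qed.

Lemma pintB p q a b : a < b -> pint (p - q) a b = pint p a b - pint q a b.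
Proof. by move=> ab; rewrite pintD ?pintN. Qed.

Lemma pint_sum (I : Type) (r : seq I) (F : I -> {poly R}) a b : a < b ->
  pint (\sum_(i <- r) F i) a b = \sum_(i <- r) pint (F i) a b.
Proof.
move=> ab.
by apply: (big_morph (fun p => pint p a b)) => [p q|]; rewrite ?pintD ?pint0.
Qed.

Lemma pint_affine_pullback p s o : 0 < s ->
  pint (s^-1 *: (p \Po (s^-1 *: ('X - o%:P)))) o (o + s) = pint p 0 1.
Proof.
move=> s_gt0.
rewrite (@pint_ftc _ (poly_prim p \Po (s^-1 *: ('X - o%:P)))); last 2 first.
- by rewrite ltrDl.
- rewrite deriv_comp deriv_poly_prim derivZ derivB derivX derivC subr0.
  by rewrite mulrC -scalerAl mul1r.
rewrite pint_prim ?ltr01 // !horner_comp !hornerZ !hornerD !hornerN.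
by rewrite !hornerX !hornerC subrr mulr0 addrAC subrr add0r mulVf ?gt_eqF.
Qed.

Lemma pint_subdivision p n (g : nat -> R) : (0 < n)%N ->
  (forall k, (k < n)%N -> g k < g k.+1) ->
  \sum_(k < n) pint p (g k) (g k.+1) = pint p (g 0%N) (g n).
Proof.
move=> n_gt0 g_incr.
have g0n : g 0%N < g n.
  elim: n n_gt0 g_incr => // -[|m] IHm _ g_incr; first exact: g_incr.
  by apply: lt_trans (IHm _ _) (g_incr _ _) => // k /ltnW; exact: g_incr.
under eq_bigr => k _ do rewrite pint_prim ?g_incr //.
rewrite pint_prim // -(telescope_sumr (fun k => (poly_prim p).[g k]) (leq0n n)).
by rewrite big_mkord.
Qed.

End PolyIntegral.

Section LagrangeBasis.
Variables (R : realType) (N : nat) (X : 'I_N -> R).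
Hypothesis X_inj : injective X.

Lemma size_lagrange_basis j : (size (lagrange_basis X j) <= N)%N.
Proof.
rewrite /lagrange_basis scaler_prod (leq_trans (size_scale_leq _ _)) //.
rewrite size_prod => [|i _]; last by rewrite polyXsubC_eq0.
under eq_bigr do rewrite size_XsubC.
rewrite sum_nat_const cardC1 card_ord.
have := ltn_ord j; lia.
Qed.

Lemma lagrange_basis_node j i : (lagrange_basis X j).[X i] = (i == j)%:R.
Proof.
rewrite /lagrange_basis horner_prod; have [->|nij] := eqVneq i j.
  apply: big1 => k kj; rewrite hornerZ hornerXsubC mulVf // subr_eq0.
  by apply: contra kj => /eqP/X_inj ->.
by rewrite (bigD1 i) //= hornerZ hornerXsubC subrr mulr0 mul0r.
Qed.

Lemma lagrange_interpolation (p : {poly R}) : (size p <= N)%N ->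
  p = \sum_(j < N) p.[X j] *: lagrange_basis X j.
Proof.
move=> size_p; apply/eqP; rewrite -subr_eq0; apply/eqP.
apply: (@roots_geq_poly_eq0 _ _ [seq X i | i <- enum 'I_N]).
- apply/allP => _ /mapP [i _ ->].
  rewrite /root hornerD hornerN horner_sum (bigD1 i) //=.
  rewrite hornerZ lagrange_basis_node eqxx mulr1.
  rewrite big1 ?addr0 ?subrr // => k ki.
  by rewrite hornerZ lagrange_basis_node eq_sym (negPf ki) mulr0.
- by rewrite map_inj_uniq ?enum_uniq.
rewrite size_map size_enum_ord (leq_trans (size_polyD _ _)) // geq_max size_p /=.
rewrite size_polyN (leq_trans (size_sum _ _ _)) //; apply/bigmax_leqP => j _.
exact: leq_trans (size_scale_leq _ _) (size_lagrange_basis j).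
Qed.

Lemma sum_lagrange_basis : (0 < N)%N -> \sum_(j < N) lagrange_basis X j = 1.
Proof.
move=> N_gt0; rewrite [RHS](lagrange_interpolation 1) ?size_poly1 //.
by apply: eq_bigr => j _; rewrite hornerC scale1r.
Qed.

End LagrangeBasis.

Lemma sum_pint_mul_lagrange_basis {R : realType} {N : nat} (X : 'I_N -> R) q a b :
  (0 < N)%N -> injective X -> a < b ->
  \sum_(j < N) pint (q * lagrange_basis X j) a b = pint q a b.
Proof.
move=> N_gt0 X_inj ab.
by rewrite -pint_sum // -mulr_sumr sum_lagrange_basis ?mulr1.
Qed.

Section FaceSubdivision.
Context {R : realType} {M : finType} {len : M -> R} {ms : seq M}.
Hypotheses (len_gt0 : forall x, 0 < len x) (ms_neq0 : (0 < size ms)%N).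

Lemma face_len_gt0 : 0 < face_len len ms.
Proof.
rewrite /face_len; case: ms ms_neq0 => // x s _.
rewrite big_cons (lt_le_trans (len_gt0 x)) // lerDl.
by apply: sumr_ge0 => y _; exact/ltW.
Qed.

Lemma face_s_gt0 k : 0 < face_s len ms k.
Proof. exact: divr_gt0 (len_gt0 _) face_len_gt0. Qed.

(* The breakpoints 0 = o_0 < ... < o_m = 1 of the face, indexed by [nat];
   [face_cut k] is convertible to [face_o len ms k] for [k : 'I_m]. *)
Definition face_cut (m : nat) : R :=
  \sum_(a < size ms | (a < m)%N) face_s len ms a.

Lemma face_cut0 : face_cut 0 = 0.
Proof. by apply: big1 => a; rewrite ltn0. Qed.

Lemma face_cutS (k : 'I_(size ms)) :
  face_cut k.+1 = face_o len ms k + face_s len ms k.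
Proof.
rewrite /face_cut (bigD1 k) //= addrC; congr (_ + _).
by apply: eq_bigl => a; rewrite ltnS ltn_neqAle andbC.
Qed.

Lemma face_cut_size : face_cut (size ms) = 1.
Proof.
rewrite /face_cut (eq_bigl xpredT) => [|a]; last by rewrite ltn_ord.
have -> : \sum_(a < size ms) face_s len ms a = face_len len ms / face_len len ms.
  by rewrite -mulr_suml /face_len (big_tnth _ _ ms).
exact: divff (lt0r_neq0 face_len_gt0).
Qed.

Lemma face_cut_incr k : (k < size ms)%N -> face_cut k < face_cut k.+1.
Proof.
by move=> k_lt; rewrite (face_cutS (Ordinal k_lt)) ltrDl face_s_gt0.
Qed.

Lemma face_projection_integral {N} {X : 'I_N -> R} {Fb : M -> {poly R}} {Ft} :
  (0 < N)%N -> injective X -> is_face_projection X len Fb ms Ft ->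
  pint Ft 0 1 = \sum_(k < size ms) pint (Fb (face_mortar ms k)) 0 1.
Proof.
move=> N_gt0 X_inj proj.
rewrite -[in LHS]face_cut0 -[in LHS]face_cut_size -pint_subdivision //;
  last exact: face_cut_incr.
apply/eqP; rewrite -subr_eq0 -sumrB; apply/eqP.
under eq_bigr => k _ do rewrite face_cutS
  -(pint_affine_pullback _ _ _ (face_o len ms k) (face_s_gt0 k))
  -pintB ?ltrDl ?face_s_gt0 //
  -(sum_pint_mul_lagrange_basis X _ _ _ N_gt0 X_inj) ?ltrDl ?face_s_gt0 //.
by rewrite exchange_big; apply: big1 => j _; exact: proj.
Qed.

End FaceSubdivision.

Lemma sumr_count_mem {V : nmodType} {M : finType} (f : M -> V) (s : seq M) :
  \sum_(x <- s) f x = \sum_(x : M) f x *+ count_mem x s.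
Proof.
elim: s => [|y s IHs]; first by rewrite big_nil big1.
rewrite big_cons IHs /=; under [RHS]eq_bigr do rewrite mulrnDr.
rewrite big_split /=; congr (_ + _).
under eq_bigr do rewrite mulrb eq_sym.
by rewrite -big_mkcond big_pred1_eq.
Qed.

Lemma sumr_exact_cover {V : nmodType} {M W : finType}
    (m : W -> seq M) (f : M -> V) :
  (forall x, \sum_(w : W) count_mem x (m w) = 1%N) ->
  \sum_(w : W) \sum_(x <- m w) f x = \sum_(x : M) f x.
Proof.
move=> cover; under eq_bigr do rewrite sumr_count_mem.
by rewrite exchange_big; apply: eq_bigr => x _; rewrite sumrMnr cover.
Qed.

Theorem mainTheorem2 (R : realType) (N : nat) (X : 'I_N -> R)
  (M Lf Rf : finType) (len : M -> R)
  (mL : Lf -> seq M) (mR : Rf -> seq M)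
  (Fb : M -> {poly R}) (FtL : Lf -> {poly R}) (FtR : Rf -> {poly R}) :
  (1 <= N)%N ->
  injective X ->
  (forall i, root (shifted_legendre R N) (X i)) ->
  (forall x : M, 0 < len x) ->
  (forall w : Lf, (1 <= size (mL w))%N) ->
  (forall w : Rf, (1 <= size (mR w))%N) ->
  (forall x : M, \sum_(w : Lf) count_mem x (mL w) = 1%N) ->
  (forall x : M, \sum_(w : Rf) count_mem x (mR w) = 1%N) ->
  (forall x : M, (size (Fb x) <= N)%N) ->
  (forall w : Lf, (size (FtL w) <= N)%N) ->
  (forall w : Rf, (size (FtR w) <= N)%N) ->
  (forall w : Lf, is_face_projection X len Fb (mL w) (FtL w)) ->
  (forall w : Rf, is_face_projection X len Fb (mR w) (FtR w)) ->
  (forall w : Lf, pint (FtL w) 0 1 =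
       \sum_(k < size (mL w)) pint (Fb (face_mortar (mL w) k)) 0 1) /\
  (forall w : Rf, pint (FtR w) 0 1 =
       \sum_(k < size (mR w)) pint (Fb (face_mortar (mR w) k)) 0 1) /\
  (\sum_(w : Lf) pint (FtL w) 0 1 = \sum_(x : M) pint (Fb x) 0 1) /\
  (\sum_(x : M) pint (Fb x) 0 1 = \sum_(w : Rf) pint (FtR w) 0 1).
Proof.
move=> N_gt0 X_inj _ len_gt0 mL_neq0 mR_neq0 coverL coverR _ _ _ projL projR.
have faceL w :=
  face_projection_integral len_gt0 (mL_neq0 w) N_gt0 X_inj (projL w).
have faceR w :=
  face_projection_integral len_gt0 (mR_neq0 w) N_gt0 X_inj (projR w).
have total (W : finType) (m : W -> seq M) :
    (forall x, \sum_(w : W) count_mem x (m w) = 1%N) ->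
    \sum_(w : W) \sum_(k < size (m w)) pint (Fb (face_mortar (m w) k)) 0 1 =
    \sum_(x : M) pint (Fb x) 0 1.
  move=> cover; rewrite -(sumr_exact_cover m (fun x => pint (Fb x) 0 1) cover).
  by apply: eq_bigr => w _; rewrite (big_tnth _ _ (m w)).
split; first exact: faceL.
split; first exact: faceR.
split; first by under eq_bigr do rewrite faceL; exact: total.
by under [RHS]eq_bigr do rewrite faceR; rewrite total.
Qed.
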